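(* Let $1\le r\le\infty$ and define, for nonzero closed convex cones $P,Q\subseteq\mathbb R^n$, ${\rm Dis}_r(P,Q):={\rm dis}_r(P\cap S_n,Q\cap S_n)$. Then ${\rm Dis}_r$ is a distance on the set of nonzero closed convex cones of $\mathbb R^n$, and $${\rm Dis}_r(P,Q)=2\left\|\left(\sin\left[\tfrac{\Theta(P,Q)}{2}\right],\ \sin\left[\tfrac{\Theta(Q,P)}{2}\right]\right)\right\|_r .$$ In particular $\Lambda(P\cap S_n,Q\cap S_n)=2\sin[\Theta(P,Q)/2]$.
   Context: $S_n:=\{u\in\mathbb R^n:\|u\|=1\}$. For nonempty compact $C,D\subseteq\mathbb R^n$: $\mathtt d_D(x):=\min_{y\in D}\|x-y\|$, $\Lambda(C,D):=\max_{x\in C}\mathtt d_D(x)$, and ${\rm dis}_r(C,D):=\|(\Lambda(C,D),\Lambda(D,C))\|_r$, with $\|\cdot\|_r$ the $\ell^r$-norm on $\mathbb R^2$. For nonzero closed convex cones $P,Q$, $\Theta(P,Q):=\max_{u\in P\cap S_n}\min_{v\in Q\cap S_n}\arccos\langle u,v\rangle$. *)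

From HB Require Import structures.
From mathcomp Require Import all_boot all_order all_algebra.
From mathcomp Require Import all_classical all_reals all_analysis.
Set Implicit Arguments. Unset Strict Implicit. Unset Printing Implicit Defensive.
Import Order.TTheory GRing.Theory Num.Theory.
Import numFieldNormedType.Exports.
Local Open Scope classical_set_scope.
Local Open Scope ring_scope.

Section Defs.
Variables (R : realType) (n : nat).
Implicit Types (x y u v : 'rV[R]_n) (C D P Q : set 'rV[R]_n).

Definition dotp u v : R := \sum_(i < n) u 0 i * v 0 i.
Definition enorm x : R := Num.sqrt (dotp x x).

Definition sphere : set 'rV[R]_n := [set u | enorm u = 1].

(* d_D(x) = min_{y in D} ||x - y||  (min = inf on nonempty compact D) *)
Definition distto D x : R := inf [set enorm (x - y) | y in D].

Definition Lambda C D : R := sup [set distto D x | x in C].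

Definition lrnorm (r : \bar R) (a b : R) : R :=
  match r with
  | +oo%E => Num.max `|a| `|b|
  | r'%:E => powR (powR `|a| r' + powR `|b| r') r'^-1
  | -oo%E => 0
  end.

Definition dis r C D : R := lrnorm r (Lambda C D) (Lambda D C).

Definition Dis r P Q : R := dis r (P `&` sphere) (Q `&` sphere).

Definition Theta P Q : R :=
  sup [set inf [set acos (dotp u v) | v in Q `&` sphere] | u in P `&` sphere].

Definition nzccone P : Prop :=
  [/\ closed P,
      (forall x y (t : R), P x -> P y -> 0 <= t <= 1 -> P (t *: x + (1 - t) *: y)),
      (forall x (t : R), P x -> 0 <= t -> P (t *: x)) &
      (exists x, P x /\ x != 0)].

End Defs.

(* For unit vectors u, v the chord length |u - v| equals 2 sin (θ / 2) with
   θ = arccos <u, v>, and θ ↦ 2 sin (θ / 2) is an increasing bijection from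
   [0, π] onto [0, 2]; it therefore commutes with the infimum and supremum that
   define d and Λ, whence Λ(P ∩ S_n, Q ∩ S_n) = 2 sin (Θ(P, Q) / 2).
   That Dis_r is a distance comes from the excess Λ: it satisfies the triangle
   inequality and Λ(C, D) = 0 forces C ⊆ closure D. The Minkowski inequality on
   R^2 transfers these properties to the ℓ^r combination, and a closed cone is
   determined by its trace on the sphere. *)

From HB Require Import structures.
From mathcomp Require Import all_boot all_order all_algebra.
From mathcomp Require Import all_classical all_reals all_analysis.
From mathcomp Require Import ring lra.
Import Order.TTheory GRing.Theory Num.Theory.
Import numFieldNormedType.Exports.
Local Open Scope classical_set_scope.
Local Open Scope ring_scope.
Set Implicit Arguments. Unset Strict Implicit. Unset Printing Implicit Defensive.

Section InnerProduct.
Variables (R : realType) (n : nat).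
Implicit Types (x y z : 'rV[R]_n).

Lemma dotpC x y : dotp x y = dotp y x.
Proof. by apply: eq_bigr => i _; rewrite mulrC. Qed.

Lemma dotpDl x y z : dotp (x + y) z = dotp x z + dotp y z.
Proof. by rewrite /dotp -big_split; apply: eq_bigr => i _; rewrite !mxE mulrDl. Qed.

Lemma dotpZl (a : R) x z : dotp (a *: x) z = a * dotp x z.
Proof. by rewrite /dotp mulr_sumr; apply: eq_bigr => i _; rewrite !mxE mulrA. Qed.

Lemma dotpNl x z : dotp (- x) z = - dotp x z.
Proof. by rewrite -scaleN1r dotpZl mulN1r. Qed.

Lemma dotpBl x y z : dotp (x - y) z = dotp x z - dotp y z.
Proof. by rewrite dotpDl dotpNl. Qed.

Lemma dotpDr x y z : dotp z (x + y) = dotp z x + dotp z y.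
Proof. by rewrite dotpC dotpDl !(dotpC z). Qed.

Lemma dotpBr x y z : dotp z (x - y) = dotp z x - dotp z y.
Proof. by rewrite dotpC dotpBl !(dotpC z). Qed.

Lemma dotpZr (a : R) x z : dotp z (a *: x) = a * dotp z x.
Proof. by rewrite dotpC dotpZl dotpC. Qed.

Lemma dotp0l x : dotp 0 x = 0.
Proof. by rewrite /dotp big1 // => i _; rewrite mxE mul0r. Qed.

Lemma dotp_ge0 x : 0 <= dotp x x.
Proof. by apply: sumr_ge0 => i _; rewrite -expr2 sqr_ge0. Qed.

Lemma dotp_eq0 x : dotp x x = 0 -> x = 0.
Proof.
move/eqP; rewrite psumr_eq0 => [/allP x0|i _]; last by rewrite -expr2 sqr_ge0.
apply/rowP => i; rewrite mxE; have := x0 i (mem_index_enum i).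
by rewrite -expr2 sqrf_eq0 => /eqP.
Qed.

Lemma enorm_ge0 x : 0 <= enorm x.
Proof. exact: sqrtr_ge0. Qed.

Lemma enorm_sqr x : enorm x ^+ 2 = dotp x x.
Proof. by rewrite sqr_sqrtr // dotp_ge0. Qed.

Lemma enorm0 : enorm (0 : 'rV[R]_n) = 0.
Proof. by rewrite /enorm dotp0l sqrtr0. Qed.

Lemma enorm_eq0 x : enorm x = 0 -> x = 0.
Proof. by move=> x0; apply: dotp_eq0; rewrite -enorm_sqr x0 expr0n. Qed.

Lemma enorm_gt0 x : x != 0 -> 0 < enorm x.
Proof.
move=> x0; rewrite lt_neqAle enorm_ge0 andbT eq_sym.
by apply: contra x0 => /eqP/enorm_eq0 ->.
Qed.

Lemma cauchy_schwarz x y : dotp x y <= enorm x * enorm y.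
Proof.
have [/enorm_eq0 ->|x0] := eqVneq (enorm x) 0.
  by rewrite dotp0l mulr_ge0 ?enorm_ge0.
have [/enorm_eq0 ->|y0] := eqVneq (enorm y) 0.
  by rewrite dotpC dotp0l mulr_ge0 ?enorm_ge0.
have xy0 : 0 < enorm x * enorm y.
  by rewrite mulr_gt0 // lt_neqAle eq_sym ?x0 ?y0 enorm_ge0.
(* [0 <= |b x - a y|^2 = 2 a b (a b - <x, y>)] where [a = |x|] and [b = |y|] *)
have := dotp_ge0 (enorm y *: x - enorm x *: y).
rewrite !(dotpBl, dotpBr, dotpZl, dotpZr) -[dotp x x]enorm_sqr -[dotp y y]enorm_sqr.
rewrite (dotpC y x).
set a := enorm x; set b := enorm y; set c := dotp x y.
have -> : b * (b * a ^+ 2 - a * c) - a * (b * c - a * b ^+ 2) =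
  (2 * (a * b)) * (a * b - c) by ring.
by rewrite pmulr_rge0 ?subr_ge0 // mulr_gt0.
Qed.

Lemma enormD x y : enorm (x + y) <= enorm x + enorm y.
Proof.
rewrite -(ger0_norm (addr_ge0 (enorm_ge0 x) (enorm_ge0 y))) -sqrtr_sqr.
rewrite /enorm ler_sqrt ?sqr_ge0 // dotpDl !dotpDr -!/(enorm _) (dotpC y x).
have := cauchy_schwarz x y; rewrite -[dotp x x]enorm_sqr -[dotp y y]enorm_sqr.
nra.
Qed.

Lemma enormN x : enorm (- x) = enorm x.
Proof. by rewrite /enorm dotpNl dotpC dotpNl opprK. Qed.

Lemma enormZ (a : R) x : enorm (a *: x) = `|a| * enorm x.
Proof.
by rewrite /enorm dotpZl dotpZr mulrA -expr2 sqrtrM ?sqr_ge0 // sqrtr_sqr.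
Qed.

Lemma mx_norm_le_enorm x : `|x| <= enorm x.
Proof.
rewrite [`|x|]mx_normrE; apply: bigmax_le; first exact: enorm_ge0.
move=> [i j] _ /=; rewrite (ord1 i).
rewrite -(ger0_norm (enorm_ge0 x)) -ler_sqr ?nnegrE ?normr_ge0 //.
rewrite !real_normK ?num_real // enorm_sqr /dotp (bigD1 j) //= -expr2 lerDl.
by apply: sumr_ge0 => k _; rewrite -expr2 sqr_ge0.
Qed.

End InnerProduct.

Section LrNorm.
Variable R : realType.
Implicit Types (r : \bar R) (a b c d : R).

Lemma minkowski2 (a1 a2 b1 b2 p : R) : 1 <= p ->
  (`|a1 + b1| `^ p + `|a2 + b2| `^ p) `^ p^-1 <=
  (`|a1| `^ p + `|a2| `^ p) `^ p^-1 + (`|b1| `^ p + `|b2| `^ p) `^ p^-1.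
Proof.
move=> p1; have p0 : 0 < p by apply: lt_le_trans p1.
(* Minkowski's inequality for the counting measure, on sequences supported by {0, 1} *)
pose f a b k : R := match k with 0%N => a | 1%N => b | _ => 0 end.
have mf a b : measurable_fun setT (f a b) by [].
have Lnorm_f a b : Lnorm counting p%:E (EFin \o f a b) =
    ((`|a| `^ p + `|b| `^ p) `^ p^-1)%:E.
  rewrite Lnorm_counting // (nneseries_split 0 2); last first.
    by move=> k; rewrite lee_fin powR_ge0.
  rewrite ereal_series_cond eseries0 ?adde0; last first.
    by move=> [//|] [//|k _]; rewrite /f /= normr0 powR0 // gt_eqF.
  by rewrite big_mkord 2!big_ord_recr /= big_ord0 add0e -EFinD poweR_EFin.
have := minkowski_EFin counting (mf a1 a2) (mf b1 b2) p1.
have -> : (f a1 a2 \+ f b1 b2)%R = f (a1 + b1) (a2 + b2).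
  by apply/funext => -[|[|k]] //=; rewrite addr0.
by rewrite !Lnorm_f lee_fin.
Qed.

Lemma lrnorm_ge0 r a b : 0 <= lrnorm r a b.
Proof.
by case: r => [p| |] /=; [exact: powR_ge0 | rewrite le_max normr_ge0 | exact: lexx].
Qed.

Lemma lrnormC r a b : lrnorm r a b = lrnorm r b a.
Proof. by case: r => [p| |] /=; [rewrite addrC | rewrite maxC |]. Qed.

Lemma lrnorm00 r : (1 <= r)%E -> lrnorm r 0 0 = 0.
Proof.
case: r => [p| |] /= r1; [|by rewrite normr0 maxxx | by []].
have p0 : p != 0 by rewrite gt_eqF // (lt_le_trans ltr01) -?lee_fin.
by rewrite normr0 powR0 // addr0 powR0 // invr_eq0.
Qed.

Lemma lrnorm_eq0 r a b : (1 <= r)%E -> lrnorm r a b = 0 -> a = 0 /\ b = 0.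
Proof.
case: r => [p| |] /= r1; last by [].
  move/powR_eq0_eq0/eqP; rewrite paddr_eq0 ?powR_ge0 //.
  by case/andP => /eqP/powR_eq0_eq0/normr0_eq0 -> /eqP/powR_eq0_eq0/normr0_eq0 ->.
move=> /eqP; rewrite eq_le ge_max => /andP[/andP[a0 b0] _].
by split; apply/normr0_eq0/eqP; rewrite eq_le normr_ge0 andbT.
Qed.

Lemma lrnorm_le r a b c d : (1 <= r)%E -> `|a| <= `|c| -> `|b| <= `|d| ->
  lrnorm r a b <= lrnorm r c d.
Proof.
case: r => [p| |] /= r1 ac bd; last by [].
  have p0 : 0 < p by rewrite (lt_le_trans ltr01) -?lee_fin.
  apply: ge0_ler_powR; rewrite ?nnegrE ?addr_ge0 ?powR_ge0 ?invr_ge0 ?(ltW p0) //.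
  by apply: lerD; apply: ge0_ler_powR; rewrite ?nnegrE ?normr_ge0 ?(ltW p0).
by rewrite ge_max !le_max ac bd orbT.
Qed.

Lemma lrnormD r a b c d : (1 <= r)%E ->
  lrnorm r (a + c) (b + d) <= lrnorm r a b + lrnorm r c d.
Proof.
case: r => [p| |] /= r1; last by [].
  exact: minkowski2.
by rewrite ge_max !(le_trans (ler_normD _ _)) // lerD // le_max lexx ?orbT.
Qed.

Lemma lrnormZ r c a b : (1 <= r)%E -> 0 <= c ->
  lrnorm r (c * a) (c * b) = c * lrnorm r a b.
Proof.
case: r => [p| |] /= r1 c0; last by [].
  have p0 : 0 < p by rewrite (lt_le_trans ltr01) -?lee_fin.
  rewrite !normrM (ger0_norm c0) !powRM ?normr_ge0 // -mulrDr.
  rewrite powRM ?powR_ge0 ?addr_ge0 // -powRrM mulfV ?gt_eqF // powRr1 //.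
by rewrite !normrM (ger0_norm c0) maxr_pMr.
Qed.

End LrNorm.

Section MonotoneInfSup.
Variable R : realType.
Implicit Types (a b c d : R) (S : set R).

Lemma inf_itvcc a b S : S !=set0 -> S `<=` `[a, b]%classic -> inf S \in `[a, b].
Proof.
move=> [s0 Ss0] Sab; have := Sab _ Ss0; rewrite /= !in_itv /= => /andP[as0 s0b].
rewrite (le_trans _ s0b) ?andbT; last by apply: ge_inf => //; exists a => s /Sab /andP[].
by apply: lb_le_inf => [|s /Sab /andP[]]; first by exists s0.
Qed.

Lemma sup_itvcc a b S : S !=set0 -> S `<=` `[a, b]%classic -> sup S \in `[a, b].
Proof.
move=> [s0 Ss0] Sab; have := Sab _ Ss0; rewrite /= !in_itv /= => /andP[as0 s0b].
have hS : has_sup S by split; [exists s0 | exists b => s /Sab /andP[]].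
rewrite (le_trans as0) ?sup_upper_bound //.
by apply: ge_sup => [|s /Sab /andP[]]; first by exists s0.
Qed.

Section OrderIsomorphism.
Variables (f g : R -> R) (a b c d : R).
Hypotheses (f_mono : {in `[a, b] &, {mono f : x y / x <= y}})
  (f_itv : {in `[a, b], forall x, f x \in `[c, d]})
  (g_itv : {in `[c, d], forall y, g y \in `[a, b]})
  (gK : {in `[c, d], cancel g f}).

Let image_itv S : S `<=` `[a, b]%classic -> f @` S `<=` `[c, d]%classic.
Proof. by move=> Sab _ [s Ss <-]; apply: f_itv; apply: Sab. Qed.

Lemma inf_image_mono S : S !=set0 -> S `<=` `[a, b]%classic ->
  inf (f @` S) = f (inf S).
Proof.
move=> S0 Sab; have infS := inf_itvcc S0 Sab.
have fS0 : f @` S !=set0 by case: S0 => s Ss; exists (f s), s.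
have lbS : has_lbound S by exists a => s /Sab /andP[].
have lbfS : has_lbound (f @` S) by exists c => y /(image_itv Sab) /andP[].
apply/eqP; rewrite eq_le; apply/andP; split; last first.
  by apply: lb_le_inf => // _ [s Ss <-]; rewrite f_mono ?(Sab _ Ss) // (ge_inf lbS).
have infc := inf_itvcc fS0 (image_itv Sab).
rewrite -[leLHS]gK // f_mono ?g_itv //.
apply: lb_le_inf => // s Ss; rewrite -f_mono ?g_itv ?(Sab _ Ss) ?gK //.
exact: (ge_inf lbfS).
Qed.

Lemma sup_image_mono S : S !=set0 -> S `<=` `[a, b]%classic ->
  sup (f @` S) = f (sup S).
Proof.
move=> S0 Sab; have supS := sup_itvcc S0 Sab.
have fS0 : f @` S !=set0 by case: S0 => s Ss; exists (f s), s.
have ubS : has_sup S by split => //; exists b => s /Sab /andP[].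
have ubfS : has_sup (f @` S).
  by split => //; exists d => y /(image_itv Sab) /andP[].
apply/eqP; rewrite eq_le; apply/andP; split.
  by apply: ge_sup => // _ [s Ss <-]; rewrite f_mono ?(Sab _ Ss) // (sup_upper_bound ubS).
have supc := sup_itvcc fS0 (image_itv Sab).
rewrite -[leRHS]gK // f_mono ?g_itv //.
apply: ge_sup => // s Ss; rewrite -f_mono ?g_itv ?(Sab _ Ss) ?gK //.
exact: (sup_upper_bound ubfS).
Qed.

End OrderIsomorphism.
End MonotoneInfSup.

Section Chord.
Variable R : realType.
Implicit Types (x y t : R) (S : set R).

Definition chord x : R := 2 * sin (x / 2).

(* inverse of [chord] on [[0, 2]], read off [chord x ^+ 2 = 2 - 2 * cos x] *)
Definition achord y : R := acos (1 - y ^+ 2 / 2).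

Lemma chord_sqrt x : 0 <= x <= pi -> chord x = Num.sqrt (2 - 2 * cos x).
Proof.
move=> /andP[x0 xpi].
rewrite {2}(splitr x) -mulr2n cos_mulr2n cos2sin2.
have -> : 2 - 2 * ((1 - sin (x / 2) ^+ 2) *+ 2 - 1) = chord x ^+ 2.
  by rewrite /chord; ring.
rewrite sqrtr_sqr ger0_norm // mulr_ge0 // sin_ge0_pi //.
by rewrite divr_ge0 //= ler_pdivrMr // (le_trans xpi) // ler_peMr ?pi_ge0 ?ler1n.
Qed.

Lemma chord_acos t : -1 <= t <= 1 -> chord (acos t) = Num.sqrt (2 - 2 * t).
Proof. by move=> t1; rewrite chord_sqrt ?acos_ge0 ?acos_lepi ?acosK ?in_itv. Qed.

Lemma ler_chord : {in `[0, pi] &, {mono chord : x y / x <= y}}.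
Proof.
have ler_cos : {in `[0, pi] &, {mono @cos R : x y /~ x <= y}}.
  by apply: le_nmono_in => x y hx hy xy; rewrite ltr_cos.
move=> x y hx hy; rewrite !chord_sqrt -?in_itv // ler_sqrt; last first.
  by rewrite subr_ge0 -[leRHS]mulr1 ler_pM2l // cos_le1.
by rewrite lerD2l lerN2 ler_pM2l // ler_cos.
Qed.

Lemma chord_itv : {in `[0, pi], forall x, chord x \in `[0, 2]}.
Proof.
move=> x hx; have := hx; rewrite in_itv /= => /andP[x0 xpi].
rewrite in_itv /= chord_sqrt ?x0 ?xpi // sqrtr_ge0 /=.
rewrite -[leRHS]ger0_norm // -sqrtr_sqr ler_sqrt ?sqr_ge0 //.
by have := cos_geN1 x; lra.
Qed.

Lemma achord_itv : {in `[0, 2], forall y, achord y \in `[0, pi]}.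
Proof.
move=> y; rewrite !in_itv /= => /andP[y0 y2].
have h : -1 <= 1 - y ^+ 2 / 2 <= 1 by apply/andP; split; nra.
by rewrite acos_ge0 // acos_lepi.
Qed.

Lemma achordK : {in `[0, 2], cancel achord chord}.
Proof.
move=> y; rewrite in_itv /= => /andP[y0 y2].
have h : -1 <= 1 - y ^+ 2 / 2 <= 1 by apply/andP; split; nra.
rewrite /achord chord_acos //.
have -> : 2 - 2 * (1 - y ^+ 2 / 2) = y ^+ 2 by field.
by rewrite sqrtr_sqr ger0_norm.
Qed.

Lemma inf_chord S : S !=set0 -> S `<=` `[0, pi]%classic ->
  inf (chord @` S) = chord (inf S).
Proof. exact: inf_image_mono ler_chord chord_itv achord_itv achordK S. Qed.

Lemma sup_chord S : S !=set0 -> S `<=` `[0, pi]%classic ->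
  sup (chord @` S) = chord (sup S).
Proof. exact: sup_image_mono ler_chord chord_itv achord_itv achordK S. Qed.

End Chord.

Section HausdorffExcess.
Variables (R : realType) (n : nat).
Implicit Types (x y u v : 'rV[R]_n) (C D E : set 'rV[R]_n).
Local Notation Sn := (@sphere R n).

Lemma sphere_dotpp u : Sn u -> dotp u u = 1.
Proof. by rewrite /sphere /= -enorm_sqr => ->; rewrite expr1n. Qed.

Lemma sphere_dotp_itv u v : Sn u -> Sn v -> -1 <= dotp u v <= 1.
Proof.
move=> Su Sv; have := cauchy_schwarz u v; have := cauchy_schwarz u (- v).
by rewrite enormN Su Sv mulr1 dotpC dotpNl dotpC lerNl => -> ->.
Qed.

Lemma sphere_enormB u v : Sn u -> Sn v ->
  enorm (u - v) = chord (acos (dotp u v)).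
Proof.
move=> Su Sv; rewrite chord_acos ?sphere_dotp_itv //.
by rewrite /enorm dotpBl !dotpBr (dotpC v u) !sphere_dotpp //; congr Num.sqrt; lra.
Qed.

Lemma sphere_enormB_le2 u v : Sn u -> Sn v -> enorm (u - v) <= 2.
Proof.
move=> Su Sv; apply: le_trans (enormD u (- v)) _.
by rewrite enormN Su Sv.
Qed.

Let distto_lbound D x : has_lbound [set enorm (x - y) | y in D].
Proof. by exists 0 => _ [y _ <-]; exact: enorm_ge0. Qed.

Lemma distto_le D x y : D y -> distto D x <= enorm (x - y).
Proof. by move=> Dy; apply: (ge_inf (distto_lbound D x)); exists y. Qed.

Lemma distto_ge0 D x : D !=set0 -> 0 <= distto D x.
Proof.
move=> [y Dy]; apply: lb_le_inf; first by exists (enorm (x - y)), y.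
by move=> _ [z _ <-]; exact: enorm_ge0.
Qed.

Lemma distto_lipschitz D x y : D !=set0 ->
  distto D x <= enorm (x - y) + distto D y.
Proof.
move=> [w Dw]; rewrite -lerBlDl; apply: lb_le_inf.
  by exists (enorm (y - w)), w.
move=> _ [z Dz <-]; rewrite lerBlDl; apply: le_trans (distto_le x Dz) _.
by have := enormD (x - y) (y - z); rewrite addrA subrK.
Qed.

Lemma distto_approx D x e : D !=set0 -> 0 < e ->
  exists2 y, D y & enorm (x - y) < distto D x + e.
Proof.
move=> [w Dw] e0; have hD : has_inf [set enorm (x - y) | y in D].
  by split; [exists (enorm (x - w)), w | exact: distto_lbound].
by have [_ [y Dy <-] ?] := inf_adherent e0 hD; exists y.
Qed.

Lemma Lambda_has_sup C D : C !=set0 -> D !=set0 -> C `<=` Sn -> D `<=` Sn ->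
  has_sup [set distto D x | x in C].
Proof.
move=> [x Cx] [y Dy] CS DS; split; first by exists (distto D x), x.
exists 2 => _ [z Cz <-]; apply: le_trans (distto_le z Dy) _.
exact: sphere_enormB_le2 (CS _ Cz) (DS _ Dy).
Qed.

Lemma Lambda_ub C D x : C !=set0 -> D !=set0 -> C `<=` Sn -> D `<=` Sn ->
  C x -> distto D x <= Lambda C D.
Proof.
move=> C0 D0 CS DS Cx; apply: (sup_upper_bound (Lambda_has_sup C0 D0 CS DS)).
by exists x.
Qed.

Lemma Lambda_le C D M : C !=set0 -> (forall x, C x -> distto D x <= M) ->
  Lambda C D <= M.
Proof.
move=> [x Cx] CM; apply: ge_sup; first by exists (distto D x), x.
by move=> _ [z Cz <-]; exact: CM.
Qed.

Lemma Lambda_ge0 C D : C !=set0 -> D !=set0 -> C `<=` Sn -> D `<=` Sn ->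
  0 <= Lambda C D.
Proof.
move=> C0 D0 CS DS; have [x Cx] := C0.
exact: le_trans (distto_ge0 x D0) (Lambda_ub C0 D0 CS DS Cx).
Qed.

Lemma Lambda_triangle C D E : C !=set0 -> D !=set0 -> E !=set0 ->
  C `<=` Sn -> D `<=` Sn -> E `<=` Sn ->
  Lambda C E <= Lambda C D + Lambda D E.
Proof.
move=> C0 D0 E0 CS DS ES; apply: Lambda_le => // x Cx.
rewrite -lerBlDr; apply: le_trans (Lambda_ub C0 D0 CS DS Cx).
have [w Dw] := D0; apply: lb_le_inf; first by exists (enorm (x - w)), w.
move=> _ [y Dy <-]; rewrite lerBlDr; apply: le_trans (distto_lipschitz x y E0) _.
by rewrite lerD2l; apply: Lambda_ub.
Qed.

Lemma Lambda_id C : C !=set0 -> C `<=` Sn -> Lambda C C = 0.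
Proof.
move=> C0 CS; apply/eqP; rewrite eq_le Lambda_ge0 // andbT.
apply: Lambda_le => // x Cx.
by apply: le_trans (distto_le x Cx) _; rewrite subrr enorm0.
Qed.

Lemma Lambda_eq0 C D : C !=set0 -> D !=set0 -> C `<=` Sn -> D `<=` Sn ->
  Lambda C D = 0 -> C `<=` closure D.
Proof.
move=> C0 D0 CS DS CD0 x Cx B /nbhs_ballP[e e0 eB].
have dx0 : distto D x = 0.
  by apply/eqP; rewrite eq_le distto_ge0 // andbT -CD0 Lambda_ub.
have [y Dy xy] := distto_approx x D0 e0; exists y; split => //.
apply: eB; rewrite mx_norm_ball /ball_ /=.
by apply: le_lt_trans (mx_norm_le_enorm _) _; rewrite dx0 add0r in xy.
Qed.

End HausdorffExcess.

Section Cones.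
Variables (R : realType) (n : nat).
Implicit Types (x u v : 'rV[R]_n) (P Q : set 'rV[R]_n).
Local Notation Sn := (@sphere R n).

Definition angleto Q u : R := inf [set acos (dotp u v) | v in Q `&` Sn].

Lemma nzccone0 P : nzccone P -> P 0.
Proof. by case=> _ _ PZ [x [Px _]]; rewrite -(scale0r x); apply: PZ. Qed.

Lemma sphere_normalize x : x != 0 -> Sn ((enorm x)^-1 *: x).
Proof.
move=> x0; rewrite /sphere /= enormZ ger0_norm ?invr_ge0 ?enorm_ge0 //.
by rewrite mulVf // gt_eqF // enorm_gt0.
Qed.

Lemma nzccone_sphere_neq0 P : nzccone P -> P `&` Sn !=set0.
Proof.
case=> _ _ PZ [x [Px x0]]; exists ((enorm x)^-1 *: x).
by split; [apply: PZ; rewrite ?invr_ge0 ?enorm_ge0 | exact: sphere_normalize].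
Qed.

Lemma nzccone_subset P Q : nzccone P -> nzccone Q -> P `&` Sn `<=` Q -> P `<=` Q.
Proof.
move=> [_ _ PZ _] hQ PSQ x Px; have [_ _ QZ _] := hQ.
have [->|x0] := eqVneq x 0; first exact: nzccone0.
have -> : x = enorm x *: ((enorm x)^-1 *: x).
  by rewrite scalerA mulfV ?scale1r // gt_eqF // enorm_gt0.
apply: QZ (enorm_ge0 x); apply: PSQ; split; last exact: sphere_normalize.
by apply: PZ; rewrite ?invr_ge0 ?enorm_ge0.
Qed.

Lemma acos_dotp_itv u v : Sn u -> Sn v -> acos (dotp u v) \in `[0, pi].
Proof. by move=> Su Sv; rewrite in_itv /= acos_ge0 ?acos_lepi ?sphere_dotp_itv. Qed.

Lemma angleto_itv Q u : nzccone Q -> Sn u -> angleto Q u \in `[0, pi].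
Proof.
move=> hQ Su; apply: inf_itvcc => [|_ [v [_ Sv] <-]]; last exact: acos_dotp_itv.
by have [v Qv] := nzccone_sphere_neq0 hQ; exists (acos (dotp u v)), v.
Qed.

Lemma distto_angleto Q u : nzccone Q -> Sn u ->
  distto (Q `&` Sn) u = chord (angleto Q u).
Proof.
move=> hQ Su; rewrite /distto /angleto -inf_chord; last first.
- by move=> _ [v [_ Sv] <-]; exact: acos_dotp_itv.
- by have [v Qv] := nzccone_sphere_neq0 hQ; exists (acos (dotp u v)), v.
rewrite image_comp; congr inf; apply: eq_imagel => v [_ Sv] /=.
exact: sphere_enormB.
Qed.

Lemma Theta_itv P Q : nzccone P -> nzccone Q -> Theta P Q \in `[0, pi].
Proof.
move=> hP hQ; apply: sup_itvcc => [|_ [u [_ Su] <-]]; last exact: angleto_itv.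
by have [u Pu] := nzccone_sphere_neq0 hP; exists (angleto Q u), u.
Qed.

Lemma Lambda_chord P Q : nzccone P -> nzccone Q ->
  Lambda (P `&` Sn) (Q `&` Sn) = chord (Theta P Q).
Proof.
move=> hP hQ; rewrite /Lambda -/(angleto Q) /Theta -sup_chord; last first.
- by move=> _ [u [_ Su] <-]; exact: angleto_itv.
- by have [u Pu] := nzccone_sphere_neq0 hP; exists (angleto Q u), u.
rewrite image_comp; congr sup; apply: eq_imagel => u [_ Su] /=.
exact: distto_angleto.
Qed.

End Cones.

Section ConeDistance.
Variables (R : realType) (n : nat) (r : \bar R).
Hypothesis r1 : (1 <= r)%E.
Implicit Types (P Q T : set 'rV[R]_n).
Local Notation Sn := (@sphere R n).
Local Hint Resolve nzccone_sphere_neq0 subIsetr : core.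

Lemma Dis_sin P Q : nzccone P -> nzccone Q ->
  Dis r P Q = 2 * lrnorm r (sin (Theta P Q / 2)) (sin (Theta Q P / 2)).
Proof. by move=> hP hQ; rewrite /Dis /dis !Lambda_chord // lrnormZ. Qed.

Lemma Lambda_cone_eq0 P Q : nzccone P -> nzccone Q ->
  Lambda (P `&` Sn) (Q `&` Sn) = 0 -> P `<=` Q.
Proof.
move=> hP hQ /(Lambda_eq0 (nzccone_sphere_neq0 hP) (nzccone_sphere_neq0 hQ)
  (@subIsetr _ P Sn) (@subIsetr _ Q Sn)) PQ.
have [closedQ _ _ _] := hQ.
by apply: nzccone_subset => // x /PQ /(closureS (@subIsetl _ Q Sn)) /closedQ.
Qed.

Lemma Dis_eq0 P Q : nzccone P -> nzccone Q -> Dis r P Q = 0 <-> P = Q.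
Proof.
move=> hP hQ; split => [|<-]; last by rewrite /Dis /dis Lambda_id ?lrnorm00; auto.
case/(lrnorm_eq0 r1) => PQ QP.
by apply/seteqP; split; apply: Lambda_cone_eq0.
Qed.

Lemma Dis_triangle P Q T : nzccone P -> nzccone Q -> nzccone T ->
  Dis r P T <= Dis r P Q + Dis r Q T.
Proof.
move=> hP hQ hT; rewrite /Dis /dis; apply: (le_trans _ (lrnormD _ _ _ _ r1)).
apply: lrnorm_le => //; rewrite !ger0_norm ?addr_ge0 ?Lambda_ge0; auto.
- by apply: Lambda_triangle; auto.
- by rewrite addrC; apply: Lambda_triangle; auto.
Qed.

End ConeDistance.

Theorem mainTheorem4 (R : realType) (n : nat) (r : \bar R) (hr : (1 <= r)%E) :
      (forall P Q : set 'rV[R]_n, nzccone P -> nzccone Q -> 0 <= Dis r P Q) /\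
      (forall P Q : set 'rV[R]_n, nzccone P -> nzccone Q ->
         (Dis r P Q = 0 <-> P = Q)) /\
      (forall P Q : set 'rV[R]_n, nzccone P -> nzccone Q ->
         Dis r P Q = Dis r Q P) /\
      (forall P Q T : set 'rV[R]_n, nzccone P -> nzccone Q -> nzccone T ->
         Dis r P T <= Dis r P Q + Dis r Q T) /\
      (forall P Q : set 'rV[R]_n, nzccone P -> nzccone Q ->
         Dis r P Q = 2 * lrnorm r (sin (Theta P Q / 2)) (sin (Theta Q P / 2))) /\
      (forall P Q : set 'rV[R]_n, nzccone P -> nzccone Q ->
         Lambda (P `&` @sphere R n) (Q `&` @sphere R n) = 2 * sin (Theta P Q / 2)).
Proof.
split; first by move=> *; exact: lrnorm_ge0.
split; first exact: Dis_eq0.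
split; first by move=> P Q _ _; exact: lrnormC.
split; first exact: Dis_triangle.
split; first exact: Dis_sin.
exact: Lambda_chord.
Qed.
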